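(* Let $a\in\mathbb{H}$ have norm one, $\psi$ a linear isometry of $\mathbb{H}$, and $\varphi=T_{a,\bar a}\circ\sigma_{\mathbb{H}}$. Consider the conditions (i) $\varphi(\varphi(x)x)=\varphi(x)x$ for all $x$, (ii) $\varphi(\bar x\psi(x))=\bar x\psi(x)$ for all $x$, (iii) $\psi(\psi(y)\bar x+y\varphi(x))=\psi(y)\bar x+y\varphi(x)$ for all $x,y$. Then: (1) $(\varphi,\psi)$ satisfies (i) if and only if $a^2=\pm1$. (2) Assume $a^2=-1$. (a) For norm-one $b,c\in\mathrm{Im}(\mathbb{H})$, the pair $(\varphi,T_{b,c})$ satisfies (ii) and (iii) if and only if $c=\pm a$. (b) For norm-one $b\in\mathbb{H}$, neither $(\varphi,T_{b,b}\circ\sigma_{\mathbb{H}})$ nor $(\varphi,T_{b,-b}\circ\sigma_{\mathbb{H}})$ satisfies (ii).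
   Context: $T_{a,b}(x)=axb$ and $\sigma_{\mathbb{H}}(x)=\bar x$ on the quaternions $\mathbb{H}$; $\mathrm{Im}(\mathbb{H})$ is the space of pure quaternions. *)

From HB Require Import structures.
From mathcomp Require Import all_boot all_order all_algebra.
From mathcomp Require Import reals.
Set Implicit Arguments. Unset Strict Implicit. Unset Printing Implicit Defensive.
Import Order.TTheory GRing.Theory Num.Theory.
Local Open Scope ring_scope.

(* x = q0 + q1 i + q2 j + q3 k *)
Record quat (R : realType) := Quat { q0 : R; q1 : R; q2 : R; q3 : R }.

Section Quat.
Variable R : realType.
Implicit Types x y : quat R.

Definition qadd x y := Quat (q0 x + q0 y) (q1 x + q1 y) (q2 x + q2 y) (q3 x + q3 y).
Definition qopp x := Quat (- q0 x) (- q1 x) (- q2 x) (- q3 x).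
Definition qscale (r : R) x := Quat (r * q0 x) (r * q1 x) (r * q2 x) (r * q3 x).
Definition qone : quat R := Quat 1 0 0 0.

(* Hamilton product: i^2 = j^2 = k^2 = ijk = -1 *)
Definition qmul x y :=
  Quat (q0 x * q0 y - q1 x * q1 y - q2 x * q2 y - q3 x * q3 y)
       (q0 x * q1 y + q1 x * q0 y + q2 x * q3 y - q3 x * q2 y)
       (q0 x * q2 y - q1 x * q3 y + q2 x * q0 y + q3 x * q1 y)
       (q0 x * q3 y + q1 x * q2 y - q2 x * q1 y + q3 x * q0 y).

Definition qconj x := Quat (q0 x) (- q1 x) (- q2 x) (- q3 x).

Definition qnorm x : R := Num.sqrt (q0 x ^+ 2 + q1 x ^+ 2 + q2 x ^+ 2 + q3 x ^+ 2).

Definition is_pure x : Prop := q0 x = 0.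

Definition T (a b : quat R) (x : quat R) : quat R := qmul (qmul a x) b.

Definition linear_isometry (f : quat R -> quat R) : Prop :=
  (forall x y, f (qadd x y) = qadd (f x) (f y)) /\
  (forall (r : R) x, f (qscale r x) = qscale r (f x)) /\
  (forall x, qnorm (f x) = qnorm x).

Definition cond_i (phi psi : quat R -> quat R) : Prop :=
  forall x, phi (qmul (phi x) x) = qmul (phi x) x.
Definition cond_ii (phi psi : quat R -> quat R) : Prop :=
  forall x, phi (qmul (qconj x) (psi x)) = qmul (qconj x) (psi x).
Definition cond_iii (phi psi : quat R -> quat R) : Prop :=
  forall x y, psi (qadd (qmul (psi y) (qconj x)) (qmul y (phi x)))
              = qadd (qmul (psi y) (qconj x)) (qmul y (phi x)).
End Quat.

From mathcomp Require Import all_boot all_order all_algebra.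
From mathcomp Require Import reals.
From mathcomp Require Import ring lra.
Import Order.TTheory GRing.Theory Num.Theory.
Local Open Scope ring_scope.
Set Implicit Arguments. Unset Strict Implicit.

(* (1) For x <> 0, cancelling the common left factor a xbar turns phi(phi(x) x) = phi(x) x
   into a x abar abar = abar x, that is a^2 x = x a^2 when |a| = 1.  So (i) says that a^2
   is central, i.e. real, i.e. a^2 = +-1.
   (2) For a pure unit a, phi(z) = z - 2 <a,z> a fixes exactly the z orthogonal to a.
   As <a, xbar b x c> = <a cbar, xbar b x> and the sandwiches xbar b x span Im(H), (ii) for
   T_{b,c} says that a cbar is real, which for unit a, c means c = +-a; (iii) is then a
   direct computation. *)

Section Quaternions.
Variable R : realType.
Implicit Types (r s : R) (a b c u v w x y z : quat R).

Lemma quat_ext x y : q0 x = q0 y -> q1 x = q1 y -> q2 x = q2 y -> q3 x = q3 y -> x = y.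
Proof. by case: x; case: y => /= ? ? ? ? ? ? ? ? -> -> -> ->. Qed.

Definition qnorm2 x := q0 x ^+ 2 + q1 x ^+ 2 + q2 x ^+ 2 + q3 x ^+ 2.
Definition qdot x y := q0 x * q0 y + q1 x * q1 y + q2 x * q2 y + q3 x * q3 y.
Definition is_real x : Prop := [/\ q1 x = 0, q2 x = 0 & q3 x = 0].

Lemma qnorm_eq1 x : qnorm x = 1 -> qnorm2 x = 1.
Proof.
rewrite /qnorm -/(qnorm2 x) => nx1.
have nx_ge0 : 0 <= qnorm2 x by rewrite /qnorm2 !addr_ge0 ?sqr_ge0.
by rewrite -(sqr_sqrtr nx_ge0) nx1 expr1n.
Qed.

Lemma qnorm2_eq0 x : qnorm2 x = 0 -> x = Quat 0 0 0 0.
Proof.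
case: x => x0 x1 x2 x3; rewrite /qnorm2 /= => nx0.
by apply: quat_ext => /=; nra.
Qed.

Lemma qnorm2_mul x y : qnorm2 (qmul x y) = qnorm2 x * qnorm2 y.
Proof. by case: x => ????; case: y => ????; rewrite /qnorm2 /=; ring. Qed.

Lemma qnorm2_conj x : qnorm2 (qconj x) = qnorm2 x.
Proof. by case: x => ????; rewrite /qnorm2 /=; ring. Qed.

Lemma qnorm2Z r x : qnorm2 (qscale r x) = r ^+ 2 * qnorm2 x.
Proof. by case: x => ????; rewrite /qnorm2 /=; ring. Qed.

Lemma qmulA x y z : qmul x (qmul y z) = qmul (qmul x y) z.
Proof. by case: x => ????; case: y => ????; case: z => ????; apply: quat_ext => /=; ring. Qed.

Lemma qconjK : involutive (@qconj R).
Proof. by case=> ????; apply: quat_ext => /=; rewrite ?opprK. Qed.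

Lemma qoppK : involutive (@qopp R).
Proof. by case=> ????; apply: quat_ext => /=; rewrite ?opprK. Qed.

Lemma qscale1 x : qscale 1 x = x.
Proof. by case: x => ????; apply: quat_ext => /=; rewrite mul1r. Qed.

Lemma qscaleN1 x : qscale (-1) x = qopp x.
Proof. by case: x => ????; apply: quat_ext => /=; rewrite mulN1r. Qed.

Lemma qmul_real r x : qmul (Quat r 0 0 0) x = qscale r x.
Proof. by case: x => ????; apply: quat_ext => /=; ring. Qed.

Lemma qmul_conjl x y : qmul (qconj x) (qmul x y) = qscale (qnorm2 x) y.
Proof. by case: x => ????; case: y => ????; apply: quat_ext; rewrite /qnorm2 /=; ring. Qed.

Lemma qmul_conjr x y : qmul (qmul x y) (qconj y) = qscale (qnorm2 y) x.
Proof. by case: x => ????; case: y => ????; apply: quat_ext; rewrite /qnorm2 /=; ring. Qed.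

Lemma qscale_inj r : r != 0 -> injective (qscale r).
Proof.
move=> r0 [x0 x1 x2 x3] [y0 y1 y2 y3] [] /(mulfI r0) -> /(mulfI r0) ->.
by move=> /(mulfI r0) -> /(mulfI r0) ->.
Qed.

Lemma qmulI x : qnorm2 x != 0 -> injective (qmul x).
Proof.
move=> nx p q /(congr1 (qmul (qconj x))).
by rewrite !qmul_conjl => /(qscale_inj nx).
Qed.

Lemma qmulIr x : qnorm2 x != 0 -> injective (fun p => qmul p x).
Proof.
move=> nx p q /(congr1 (fun p => qmul p (qconj x))).
by rewrite !qmul_conjr => /(qscale_inj nx).
Qed.

Lemma qaddC x y : qadd x y = qadd y x.
Proof. by apply: quat_ext => /=; rewrite addrC. Qed.

Lemma T_add a b x y : T a b (qadd x y) = qadd (T a b x) (T a b y).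
Proof.
by case: a => ????; case: b => ????; case: x => ????; case: y => ????; apply: quat_ext => /=; ring.
Qed.

Lemma qdotDr u v w : qdot u (qadd v w) = qdot u v + qdot u w.
Proof. by rewrite /qdot /=; ring. Qed.

Lemma qdotZr r u v : qdot u (qscale r v) = r * qdot u v.
Proof. by rewrite /qdot /=; ring. Qed.

Lemma qdotxx u : qdot u u = qnorm2 u.
Proof. by rewrite /qdot /qnorm2; ring. Qed.

Lemma qdot_mulr u v c : qdot u (qmul v c) = qdot (qmul u (qconj c)) v.
Proof. by rewrite /qdot /=; ring. Qed.

Lemma qdot_real w z : is_real w -> qdot w z = q0 w * q0 z.
Proof. by case=> w1 w2 w3; rewrite /qdot w1 w2 w3; ring. Qed.

Lemma q0_sandwich b x : q0 (qmul (qmul (qconj x) b) x) = qnorm2 x * q0 b.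
Proof. by rewrite /qnorm2 /=; ring. Qed.

Lemma central_real c : (forall x, qmul c x = qmul x c) <-> is_real c.
Proof.
split=> [commc | [c1 c2 c3] x]; last first.
  by case: c c1 c2 c3 => ???? /= -> -> ->; apply: quat_ext => /=; ring.
have /= i2 := congr1 (@q2 R) (commc (Quat 0 1 0 0)).
have /= i3 := congr1 (@q3 R) (commc (Quat 0 1 0 0)).
have /= j3 := congr1 (@q3 R) (commc (Quat 0 0 1 0)).
by split; lra.
Qed.

Lemma sqr_eqN1_pure a : qmul a a = qopp (qone R) -> is_pure a.
Proof.
case: a => a0 a1 a2 a3 e; rewrite /is_pure /=.
have /= e0 := congr1 (@q0 R) e; have /= e1 := congr1 (@q1 R) e.
have /= e2 := congr1 (@q2 R) e; have /= e3 := congr1 (@q3 R) e.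
nra.
Qed.

Lemma unit_sqr_real a : qnorm2 a = 1 ->
  is_real (qmul a a) <-> qmul a a = qone R \/ qmul a a = qopp (qone R).
Proof.
move=> na1; split; last by case=> ->; split; rewrite /= ?oppr0.
case: a na1 => a0 a1 a2 a3; rewrite /qnorm2 /= => na1 [/= h1 h2 h3].
have [a0_0 | a0n0] := eqVneq a0 0.
  by right; subst; apply: quat_ext => /=; nra.
have a1_0 : a1 = 0 by apply: (mulfI a0n0); lra.
have a2_0 : a2 = 0 by apply: (mulfI a0n0); lra.
have a3_0 : a3 = 0 by apply: (mulfI a0n0); lra.
by left; subst; apply: quat_ext => /=; nra.
Qed.

Definition phi a x := T a (qconj a) (qconj x).

(* phi(phi(x) x) = (a xbar) (a x abar abar) and phi(x) x = (a xbar) (abar x), and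
   p |-> a p a^2 sends a x abar abar to |a|^4 a^2 x and abar x to |a|^2 x a^2. *)
Lemma phi_prod_fixed a x : qnorm2 a = 1 -> qnorm2 x != 0 ->
  phi a (qmul (phi a x) x) = qmul (phi a x) x <->
  qmul (qmul a a) x = qmul x (qmul a a).
Proof.
have [-> -> lhs_eq rhs_eq] : [/\
    phi a (qmul (phi a x) x) =
      qmul (qmul a (qconj x)) (qmul (qmul (qmul a x) (qconj a)) (qconj a)),
    qmul (phi a x) x = qmul (qmul a (qconj x)) (qmul (qconj a) x),
    qmul (qmul a (qmul (qmul (qmul a x) (qconj a)) (qconj a))) (qmul a a) =
      qscale (qnorm2 a ^+ 2) (qmul (qmul a a) x) &
    qmul (qmul a (qmul (qconj a) x)) (qmul a a) = qscale (qnorm2 a) (qmul x (qmul a a))].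
  by case: a => ????; case: x => ????; split; apply: quat_ext; rewrite /qnorm2 /=; ring.
move=> na1 nx; rewrite na1 expr1n !qscale1 in lhs_eq rhs_eq.
have na : qnorm2 a != 0 by rewrite na1 oner_neq0.
have naa : qnorm2 (qmul a a) != 0 by rewrite qnorm2_mul na1 mul1r oner_neq0.
have nax : qnorm2 (qmul a (qconj x)) != 0 by rewrite qnorm2_mul qnorm2_conj na1 mul1r.
have mulaaI : injective (fun p => qmul (qmul a p) (qmul a a)).
  by move=> p q /(qmulIr naa) /(qmulI na).
split=> [/(qmulI nax)/(congr1 (fun p => qmul (qmul a p) (qmul a a))) | e].
  by rewrite lhs_eq rhs_eq.
by congr qmul; apply: mulaaI; rewrite lhs_eq rhs_eq.
Qed.

Lemma cond_i_central a psi : qnorm2 a = 1 ->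
  cond_i (phi a) psi <-> forall x, qmul (qmul a a) x = qmul x (qmul a a).
Proof.
move=> na1; split=> fixed x; have [/qnorm2_eq0 -> | nx] := eqVneq (qnorm2 x) 0.
- by apply: quat_ext => /=; ring.
- exact/(phi_prod_fixed na1 nx)/fixed.
- by apply: quat_ext; rewrite /phi /T /=; ring.
- exact/(phi_prod_fixed na1 nx).
Qed.

Lemma phi_pure a z : is_pure a ->
  phi a z = qadd (qscale (qnorm2 a) z) (qscale (- 2 * qdot a z) a).
Proof.
case: a => ? ? ? ?; rewrite /is_pure /= => ->.
by case: z => ????; apply: quat_ext; rewrite /qnorm2 /qdot /=; ring.
Qed.

Lemma phi_fixed_pure a z : is_pure a -> qnorm2 a = 1 -> phi a z = z <-> qdot a z = 0.
Proof.
move=> a0 na1; rewrite phi_pure // na1 qscale1.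
split=> [/(congr1 (qdot a)) | ->]; first by rewrite qdotDr !qdotZr qdotxx na1; lra.
by apply: quat_ext => /=; ring.
Qed.

(* For v the vector part of w, x = 1 - b v gives
   qdot w (xbar b x) = <b,v> (1 + |b|^2 |v|^2) + 2 |b|^2 |v|^2, while x = 1 gives <b,v>. *)
Lemma sandwich_orthogonal w b : is_pure b -> qnorm2 b != 0 ->
  (forall x, qdot w (qmul (qmul (qconj x) b) x) = 0) -> is_real w.
Proof.
move=> b0 nb orth.
have := orth (qone R).
have := orth (qadd (qone R) (qopp (qmul b (Quat 0 (q1 w) (q2 w) (q3 w))))).
case: w {orth} => w0 w1 w2 w3; case: b b0 nb => ? b1 b2 b3; rewrite /is_pure /= => -> nb e2 e1.
set d := b1 * w1 + b2 * w2 + b3 * w3.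
set beta := b1 ^+ 2 + b2 ^+ 2 + b3 ^+ 2.
have nbeta : beta != 0 by move: nb; rewrite /qnorm2 /= expr0n add0r.
set vv := w1 ^+ 2 + w2 ^+ 2 + w3 ^+ 2.
have d0 : d = 0 by rewrite -e1 /d /qdot /=; ring.
have : d * (1 + beta * vv) + 2 * beta * vv = 0 by rewrite -e2 /d /beta /vv /qdot /=; ring.
rewrite d0 mul0r add0r -mulrA => /eqP; rewrite !mulf_eq0 pnatr_eq0 (negbTE nbeta) /=.
rewrite /vv => /eqP vv0; clear -vv0; split => /=; nra.
Qed.

Lemma cond_ii_T a b c : is_pure a -> qnorm2 a = 1 -> is_pure b -> qnorm2 b != 0 ->
  cond_ii (phi a) (T b c) <-> is_real (qmul a (qconj c)).
Proof.
move=> a0 na1 b0 nb.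
have sandwichE x : qmul (qconj x) (T b c x) = qmul (qmul (qmul (qconj x) b) x) c.
  by rewrite /T !qmulA.
split=> [fixed | ac_real x].
  apply: sandwich_orthogonal b0 nb _ => x.
  by rewrite -qdot_mulr -sandwichE; apply/(phi_fixed_pure _ a0 na1)/fixed.
apply/(phi_fixed_pure _ a0 na1).
by rewrite sandwichE qdot_mulr qdot_real // q0_sandwich (b0 : q0 b = 0) !mulr0.
Qed.

Lemma unit_mul_conj_real a c : qnorm2 a = 1 -> qnorm2 c = 1 ->
  is_real (qmul a (qconj c)) <-> c = a \/ c = qopp a.
Proof.
move=> na1 nc1; split=> [[ac1 ac2 ac3] | [] ->]; last 2 first.
- by case: a {na1} => ????; split; rewrite /=; ring.
- by case: a {na1} => ????; split; rewrite /=; ring.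
set r := q0 (qmul a (qconj c)).
have a_rc : a = qscale r c.
  have := qmul_conjr a (qconj c); rewrite qconjK qnorm2_conj nc1 qscale1 => <-.
  by rewrite -qmul_real; congr qmul; apply: quat_ext.
have /eqP : r ^+ 2 = 1 by rewrite -na1 a_rc qnorm2Z nc1 mulr1.
rewrite sqrf_eq1 => /orP[] /eqP r1; rewrite r1 ?qscale1 ?qscaleN1 in a_rc.
  by left.
by right; rewrite a_rc qoppK.
Qed.

(* With psi = T b (s a): psi (psi y xbar) = s^2 |b|^2 y phi(x), since b^2 = -|b|^2, and
   psi (y phi(x)) = |a|^2 psi(y) xbar, since abar a = |a|^2. *)
Lemma cond_iii_T a b s : is_pure a -> is_pure b -> qnorm2 a = 1 -> qnorm2 b = 1 ->
  s ^+ 2 = 1 -> cond_iii (phi a) (T b (qscale s a)).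
Proof.
move=> a0 b0 na1 nb1 s2 x y.
have [psi_psi psi_phi] : T b (qscale s a) (qmul (T b (qscale s a) y) (qconj x)) =
      qscale (s ^+ 2 * qnorm2 b) (qmul y (phi a x)) /\
    T b (qscale s a) (qmul y (phi a x)) = qscale (qnorm2 a) (qmul (T b (qscale s a) y) (qconj x)).
  case: a a0 {na1} => ? ? ? ?; rewrite /is_pure /= => ->.
  case: b b0 {nb1} => ? ? ? ?; rewrite /is_pure /= => ->.
  by case: x => ????; case: y => ????; split; apply: quat_ext; rewrite /qnorm2 /=; ring.
by rewrite T_add psi_psi psi_phi na1 nb1 s2 mul1r !qscale1 qaddC.
Qed.

(* For x = b (1 - a): xbar psi(x) = s |b|^4 (1 + a)^2 = 2 s |b|^4 a, as a^2 = -1. *)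
Lemma not_cond_ii_Tconj a b s : is_pure a -> qnorm2 a = 1 -> qnorm2 b != 0 -> s != 0 ->
  ~ cond_ii (phi a) (fun x => T b (qscale s b) (qconj x)).
Proof.
move=> a0 na1 nb s0 /(_ (qmul b (qadd (qone R) (qopp a)))) /(phi_fixed_pure _ a0 na1).
rewrite (_ : qdot a _ = 2 * s * qnorm2 b ^+ 2 * qnorm2 a); last first.
  case: a a0 na1 => ? ? ? ?; rewrite /is_pure /= => -> _.
  by case: b nb => ???? _; rewrite /qdot /qnorm2 /=; ring.
by rewrite na1 mulr1; apply/eqP; rewrite !mulf_neq0 ?expf_neq0 // pnatr_eq0.
Qed.
End Quaternions.

Theorem lemma12 (R : realType) (a : quat R) (psi : quat R -> quat R) :
  qnorm a = 1 ->
  linear_isometry psi ->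
  let phi := fun x => T a (qconj a) (qconj x) in
  (* (1) *)
  (cond_i phi psi <-> (qmul a a = qone R \/ qmul a a = qopp (qone R))) /\
  (* (2) *)
  (qmul a a = qopp (qone R) ->
     (* (a) *)
     (forall b c : quat R, is_pure b -> is_pure c -> qnorm b = 1 -> qnorm c = 1 ->
        ((cond_ii phi (T b c) /\ cond_iii phi (T b c)) <-> (c = a \/ c = qopp a))) /\
     (* (b) *)
     (forall b : quat R, qnorm b = 1 ->
        ~ cond_ii phi (fun x => T b b (qconj x)) /\
        ~ cond_ii phi (fun x => T b (qopp b) (qconj x)))).
Proof.
move=> /qnorm_eq1 na1 _; rewrite -/(phi a).
split.
  apply: iff_trans (cond_i_central _ na1) _.
  exact: iff_trans (central_real _) (unit_sqr_real na1).
move=> /sqr_eqN1_pure a0; split=> [b c b0 _ /qnorm_eq1 nb1 /qnorm_eq1 nc1 | b /qnorm_eq1 nb1].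
  have nb : qnorm2 b != 0 by rewrite nb1 oner_neq0.
  split=> [[/(cond_ii_T c a0 na1 b0 nb) ac_real _] | c_pm].
    exact/(unit_mul_conj_real na1 nc1).
  split; first exact/(cond_ii_T c a0 na1 b0 nb)/(unit_mul_conj_real na1 nc1).
  case: c_pm => ->.
    by have := cond_iii_T a0 b0 na1 nb1 (expr1n _ 2); rewrite qscale1.
  have sN1 : (-1) ^+ 2 = 1 :> R by rewrite sqrrN expr1n.
  by have := cond_iii_T a0 b0 na1 nb1 sN1; rewrite qscaleN1.
have nb : qnorm2 b != 0 by rewrite nb1 oner_neq0.
split.
  by have := not_cond_ii_Tconj a0 na1 nb (oner_neq0 R); rewrite qscale1.
have nN1 : -1 != 0 :> R by rewrite oppr_eq0 oner_neq0.
by have := not_cond_ii_Tconj a0 na1 nb nN1; rewrite qscaleN1.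
Qed.
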